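(* Let $S,T$ be spin systems, $\beta>0$, and $\mathcal f:S\to T$ a simulation with cut-off $\Delta>\max(H_T)$, degeneracy $d$ and $m=|\mathrm{enc}|$ encodings. Then $$\|p_{\mathcal f,\beta}-p_{T,\beta}\|<\frac{1}{md}\,q_S^{|V_S|}\,e^{-\beta(\Delta-\min(H_T))}.$$
   Context: A spin system $S=(q_S,V_S,E_S,J_S)$: integer $q_S\ge2$, finite set $V_S$, hyperedges $E_S\subseteq\mathcal P(V_S)$ covering $V_S$, $J_S(e):[q_S]^e\to\mathbb R_{\ge0}$. $\mathcal C_S=[q_S]^{V_S}$, $H_S(\vec s)=\sum_eJ_S(e)(\vec s|_e)$, $Z_S(\beta)=\sum_{\vec s}e^{-\beta H_S(\vec s)}$, Boltzmann distribution $p_{S,\beta}(\vec s)=e^{-\beta H_S(\vec s)}/Z_S(\beta)$. Total variation distance $\|p-q\|=\frac12\sum_x|p(x)-q(x)|$. A simulation $\mathcal f:S\to T$ consists of a cut-off $\Delta>0$, shift $\Gamma\in\mathbb R$, degeneracy $d\in\mathbb N$, $P:V_T\to V_S^k$ (components $P^{(i)}$), $\mathrm{dec}:[q_S]^k\to[q_T]$, and $\mathrm{enc}=(\mathrm{enc}_i:[q_T]\to[q_S]^k)_{i=1,\dots,m}$, satisfying: (1) $P^{(i)}(v)=P^{(j)}(w)\Rightarrow i=j,\ v=w$; (2) $\mathrm{dec}\circ\mathrm{enc}_i=\mathrm{id}$; (3) $\mathrm{enc}_i(t)=\mathrm{enc}_j(t)$ for some $t$ implies $i=j$; (4) with $\mathrm{sim}_i(\vec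 t)=\{\vec s\in\mathcal C_S:\vec s\circ P=\mathrm{enc}_i\circ\vec t,\ H_S(\vec s)-\Gamma<\Delta\}$, $|\mathrm{sim}_i(\vec t)|=d$ whenever $H_T(\vec t)<\Delta$; (5) $H_S(\vec s)-\Gamma=H_T(\vec t)$ for $\vec s\in\bigcup_i\mathrm{sim}_i(\vec t)$, and $H_S(\vec s)-\Gamma\ge\Delta$ for every $\vec s$ in no $\mathrm{sim}_i(\vec t)$. Here $(\vec s\circ P)(v)=(\vec s(P^{(1)}(v)),\dots,\vec s(P^{(k)}(v)))$, $(\mathrm{enc}_i\circ\vec t)(v)=\mathrm{enc}_i(\vec t(v))$, and $\mathrm{dec}\circ\vec s\circ P\in\mathcal C_T$. The simulation distribution is the probability distribution on $\mathcal C_T$ given by $p_{\mathcal f,\beta}(\vec t)=\sum_{\vec s\in\mathcal C_S:\ \mathrm{dec}\circ\vec s\circ P=\vec t}p_{S,\beta}(\vec s)$. *)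

From HB Require Import structures.
From mathcomp Require Import all_boot all_order all_algebra.
From mathcomp Require Import reals sequences exp.
Set Implicit Arguments. Unset Strict Implicit. Unset Printing Implicit Defensive.
Import Order.TTheory GRing.Theory Num.Theory.
Local Open Scope ring_scope.

Section SpinSystems.
Variable R : realType.

(* A spin system (q, V, E, J).  The spin set [q] is 'I_q; a local
   configuration in [q]^e is a finite function on the subtype of e. *)
Record spin_system := SpinSystem {
  ss_q : nat;
  ss_V : finType;
  ss_E : {set {set ss_V}};
  ss_J : forall e : {set ss_V}, {ffun {x : ss_V | x \in e} -> 'I_ss_q} -> R
}.

Arguments ss_J : clear implicits.

Definition is_spin_system (S : spin_system) : Prop :=
  [/\ (2 <= ss_q S)%N,
      (\bigcup_(e in ss_E S) e) = [set: ss_V S] &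
      forall e, e \in ss_E S -> forall c, 0 <= ss_J S e c].

Definition config (S : spin_system) := {ffun ss_V S -> 'I_(ss_q S)}.

Definition restr (S : spin_system) (s : config S) (e : {set ss_V S})
  : {ffun {x : ss_V S | x \in e} -> 'I_(ss_q S)} :=
  [ffun x => s (val x)].

Definition ham (S : spin_system) (s : config S) : R :=
  \sum_(e in ss_E S) ss_J S e (restr s e).

Definition partfun (S : spin_system) (beta : R) : R :=
  \sum_(s : config S) expR (- (beta * ham s)).

Definition boltzmann (S : spin_system) (beta : R) (s : config S) : R :=
  expR (- (beta * ham s)) / partfun S beta.

Definition ham_max (S : spin_system) : R :=
  match [pick s : config S] with
  | Some s0 => \big[Num.max/ham s0]_(s : config S) ham s
  | None => 0
  end.

Definition ham_min (S : spin_system) : R :=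
  match [pick s : config S] with
  | Some s0 => \big[Num.min/ham s0]_(s : config S) ham s
  | None => 0
  end.

Definition tvdist (X : finType) (p q : X -> R) : R :=
  2^-1 * \sum_(x : X) `|p x - q x|.

(* Data of a simulation f : S -> T. P : V_T -> V_S^k is given by its
   components P v i = P^(i)(v); enc_i is sim_enc i. *)
Record simulation (S T : spin_system) := Simulation {
  sim_Delta : R;
  sim_Gamma : R;
  sim_d : nat;
  sim_k : nat;
  sim_P : ss_V T -> 'I_sim_k -> ss_V S;
  sim_dec : {ffun 'I_sim_k -> 'I_(ss_q S)} -> 'I_(ss_q T);
  sim_m : nat;
  sim_enc : 'I_sim_m -> 'I_(ss_q T) -> {ffun 'I_sim_k -> 'I_(ss_q S)}
}.


Arguments sim_Delta : clear implicits.
Arguments sim_Gamma : clear implicits.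
Arguments sim_d : clear implicits.
Arguments sim_k : clear implicits.
Arguments sim_P : clear implicits.
Arguments sim_dec : clear implicits.
Arguments sim_m : clear implicits.
Arguments sim_enc : clear implicits.
Arguments sim_Delta {S T}.
Arguments sim_Gamma {S T}.
Arguments sim_d {S T}.
Arguments sim_k {S T}.
Arguments sim_P {S T}.
Arguments sim_dec {S T}.
Arguments sim_m {S T}.
Arguments sim_enc {S T}.

Section SimDefs.
Variables (S T : spin_system) (f : simulation S T).

Definition compP (s : config S) (v : ss_V T) : {ffun 'I_(sim_k f) -> 'I_(ss_q S)} :=
  [ffun i => s (sim_P f v i)].

Definition decode (s : config S) : config T :=
  [ffun v => sim_dec f (compP s v)].

Definition simset (i : 'I_(sim_m f)) (t : config T) : {set config S} :=
  [set s : config S | [forall v, compP s v == sim_enc f i (t v)]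
                      && (ham s - sim_Gamma f < sim_Delta f)].

Definition is_simulation : Prop :=
  0 < sim_Delta f /\
  [/\
      (forall (i j : 'I_(sim_k f)) (v w : ss_V T),
          sim_P f v i = sim_P f w j -> i = j /\ v = w),
      (forall i t, sim_dec f (sim_enc f i t) = t),
      (forall i j t, sim_enc f i t = sim_enc f j t -> i = j),
      (forall i (t : config T), ham t < sim_Delta f -> #|simset i t| = sim_d f) &
      (forall (t : config T) i s, s \in simset i t -> ham s - sim_Gamma f = ham t)
      /\ (forall s : config S,
            (forall i (t : config T), s \notin simset i t) ->
            sim_Delta f <= ham s - sim_Gamma f)].

Definition simdist (beta : R) (t : config T) : R :=
  \sum_(s : config S | decode s == t) boltzmann beta s.

End SimDefs.
End SpinSystems.

From HB Require Import structures.
From mathcomp Require Import all_boot all_order all_algebra.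
From mathcomp Require Import reals sequences exp.
From mathcomp Require Import ring.
Import Order.TTheory GRing.Theory Num.Theory.
Set Implicit Arguments. Unset Strict Implicit. Unset Printing Implicit Defensive.
Local Open Scope ring_scope.

(* A configuration s of S either lies in some sim_i(t), with t its decoding, and
   then H_S(s) = H_T(t) + Gamma, or it lies in none and H_S(s) >= Gamma + Delta.
   Since Delta > max H_T, the sets sim_i(t) have d elements each, and they are
   disjoint because distinct encodings already differ at a single vertex.  Hence
   Z_S = m d e^(-beta Gamma) Z_T + Z_bad, and p_f is p_T perturbed by the weights
   of the remaining configurations, so ||p_f - p_T|| <= Z_bad / Z_S.  Finally
   Z_bad < q_S^|V_S| e^(-beta (Gamma + Delta)), because some configuration does
   lie in a sim_i(t), and Z_S >= m d e^(-beta Gamma) e^(-beta min H_T). *)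

Section TotalVariation.
Variables (R : realType) (X : finType).

Lemma tvdist_mix_le (p q w b : X -> R) (c : R) :
  0 < c -> (forall x, 0 <= w x) -> (forall x, 0 <= b x) -> 0 < \sum_x w x ->
  (forall x, p x = (c * w x + b x) / (c * \sum_y w y + \sum_y b y)) ->
  (forall x, q x = w x / \sum_y w y) ->
  tvdist p q <= (\sum_x b x) / (c * \sum_x w x + \sum_x b x).
Proof.
set Zw := \sum_x w x; set Zb := \sum_x b x; set Z := c * Zw + Zb.
move=> c_gt0 w_ge0 b_ge0 Zw_gt0 pE qE.
have Z_gt0 : 0 < Z by rewrite ltr_wpDr ?mulr_gt0 ?sumr_ge0.
have ZZw_ge0 : 0 <= (Z * Zw)^-1 by rewrite invr_ge0 mulr_ge0 ?ltW.
have dist_le x : `|p x - q x| <= (b x * Zw + w x * Zb) / (Z * Zw).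
  have -> : p x - q x = (b x * Zw - w x * Zb) / (Z * Zw).
    by rewrite pE qE /Z; field; rewrite !gt_eqF.
  rewrite normrM (ger0_norm ZZw_ge0); apply: ler_wpM2r => //.
  apply: le_trans (ler_normB _ _) _.
  by rewrite !ger0_norm ?mulr_ge0 ?b_ge0 ?w_ge0 ?(ltW Zw_gt0) ?sumr_ge0.
rewrite /tvdist (le_trans (ler_wpM2l _ (ler_sum _ (fun x _ => dist_le x)))) //.
  by rewrite invr_ge0.
rewrite -mulr_suml big_split /= -!mulr_suml -/Zw -/Zb le_eqVlt; apply/orP; left.
by apply/eqP; rewrite /Z; field; rewrite !gt_eqF.
Qed.

Lemma tvdist_subsingleton (p q : X -> R) :
  (forall x y : X, x = y) -> \sum_x p x = \sum_x q x -> tvdist p q = 0.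
Proof.
move=> X_sub sum_pq; rewrite /tvdist big1 ?mulr0 // => x _.
have sum_at (r : X -> R) : \sum_y r y = r x.
  by rewrite (bigD1 x) //= big1 ?addr0 // => y /eqP; rewrite (X_sub y x).
by rewrite -!sum_at sum_pq subrr normr0.
Qed.

End TotalVariation.

Section SpinSystemFacts.
Variables (R : realType) (S : spin_system R) (beta : R).

Definition weight (s : config S) : R := expR (- (beta * ham s)).

Lemma weight_le_partfun (s : config S) : weight s <= partfun S beta.
Proof.
rewrite /partfun (bigD1 s) //= lerDl.
by apply: sumr_ge0 => s' _; apply: expR_ge0.
Qed.

Lemma partfun_gt0 (s0 : config S) : 0 < partfun S beta.
Proof. exact: lt_le_trans (expR_gt0 _) (weight_le_partfun s0). Qed.

Lemma sum_boltzmann (s0 : config S) : \sum_(s : config S) boltzmann beta s = 1.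
Proof. by rewrite -mulr_suml divff // gt_eqF // (partfun_gt0 s0). Qed.

Lemma ham_le_max (s : config S) : ham s <= ham_max S.
Proof. by rewrite /ham_max; case: pickP => [s0 _|/(_ s)//]; apply: le_bigmax. Qed.

Lemma ham_min_attained (s0 : config S) : exists s : config S, ham s = ham_min S.
Proof.
rewrite /ham_min; case: pickP => [s1 _|/(_ s0)//].
have [s _ s_min] := @arg_minP _ _ _ s0 xpredT (@ham R S) isT.
exists s; apply/eqP; rewrite eq_le bigmin_le andbT.
by apply: le_bigmin => [|s' _]; apply: s_min.
Qed.

End SpinSystemFacts.

Section Simulation.
Variables (R : realType) (S T : spin_system R) (f : simulation S T) (beta : R).
Hypothesis f_sim : is_simulation f.

Definition simcover (t : config T) : {set config S} :=
  \bigcup_(i < sim_m f) simset i t.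

Definition simulated (s : config S) : bool := s \in simcover (decode f s).

Definition sim_scale : R :=
  (sim_m f * sim_d f)%:R * expR (- (beta * sim_Gamma f)).

Definition bad_weight (t : config T) : R :=
  \sum_(s | ~~ simulated s && (decode f s == t)) weight beta s.

Lemma sum_simdist (s0 : config S) : \sum_t simdist f beta t = 1.
Proof. by rewrite -(sum_boltzmann beta s0) (partition_big (decode f) xpredT). Qed.

Lemma sum_bad_weight :
  \sum_t bad_weight t = \sum_(s | ~~ simulated s) weight beta s.
Proof. by rewrite [RHS](partition_big (decode f) xpredT). Qed.

Lemma decode_simset (i : 'I_(sim_m f)) t s : s \in simset i t -> decode f s = t.
Proof.
have [_ [_ dec_enc _ _ _]] := f_sim.
rewrite inE => /andP[/forallP s_enc _]; apply/ffunP => v.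
by rewrite ffunE (eqP (s_enc v)) dec_enc.
Qed.

Lemma mem_simcover t s : (s \in simcover t) = simulated s && (decode f s == t).
Proof.
apply/idP/andP => [s_t | [s_sim /eqP <-//]].
by have [i _ s_i] := bigcupP s_t; rewrite /simulated (decode_simset s_i) s_t.
Qed.

Lemma ham_simset (i : 'I_(sim_m f)) t s : s \in simset i t -> ham s = ham t + sim_Gamma f.
Proof. by have [_ [_ _ _ _ [ham_sim _]]] := f_sim; move/ham_sim <-; rewrite subrK. Qed.

Lemma ham_not_simulated s :
  ~~ simulated s -> sim_Gamma f + sim_Delta f <= ham s.
Proof.
have [_ [_ _ _ _ [_ ham_out]]] := f_sim.
move=> s_out; rewrite -lerBrDl; apply: ham_out => i t; apply: contra s_out => s_i.
by rewrite /simulated (decode_simset s_i); apply/bigcupP; exists i.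
Qed.

Lemma bad_mass_le : 0 <= beta ->
  \sum_(s | ~~ simulated s) weight beta s
    <= #|[set s | ~~ simulated s]|%:R * expR (- (beta * (sim_Gamma f + sim_Delta f))).
Proof.
move=> beta_ge0; rewrite mulr_natl -sumr_const big_set.
apply: ler_sum => s /ham_not_simulated ham_ge.
by rewrite /weight ler_expR lerN2 ler_wpM2l.
Qed.

Lemma disjoint_simset (v0 : ss_V T) t (i j : 'I_(sim_m f)) :
  i != j -> [disjoint simset i t & simset j t].
Proof.
have [_ [_ _ enc_inj _ _]] := f_sim.
move=> /eqP i_neq_j; rewrite -setI_eq0; apply/set0Pn => -[s].
rewrite !inE => /andP[/andP[/forallP/(_ v0)/eqP s_i _] /andP[/forallP/(_ v0)/eqP s_j _]].
by apply: i_neq_j; apply: (enc_inj _ _ (t v0)); rewrite -s_i -s_j.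
Qed.

Lemma sum_simcover_weight (v0 : ss_V T) t :
  ham t < sim_Delta f -> \sum_(s in simcover t) weight beta s = sim_scale * weight beta t.
Proof.
have [_ [_ _ _ card_sim _]] := f_sim.
move=> t_lt; rewrite partition_disjoint_bigcup; last exact: disjoint_simset.
have weight_sim (i : 'I_(sim_m f)) s : s \in simset i t ->
    weight beta s = expR (- (beta * sim_Gamma f)) * weight beta t.
  by move=> s_i; rewrite /weight (ham_simset s_i) -expRD; congr expR; ring.
rewrite (eq_bigr _ (fun i _ => eq_bigr _ (weight_sim i))).
under eq_bigr do rewrite sumr_const card_sim //.
by rewrite sumr_const card_ord -mulrnA -mulr_natl /sim_scale natrM; ring.
Qed.

Section Bounds.
Variable v0 : ss_V T.
Hypothesis Delta_gt_max : ham_max T < sim_Delta f.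

Lemma ham_lt_Delta (t : config T) : ham t < sim_Delta f.
Proof. exact: le_lt_trans (ham_le_max t) Delta_gt_max. Qed.

Lemma sum_decode_weight t :
  \sum_(s | decode f s == t) weight beta s = sim_scale * weight beta t + bad_weight t.
Proof.
rewrite (bigID simulated) /= -(sum_simcover_weight v0 (ham_lt_Delta t)).
by congr (_ + _); apply: eq_bigl => s /=; rewrite ?mem_simcover andbC.
Qed.

Lemma simdist_decomp t :
  simdist f beta t = (sim_scale * weight beta t + bad_weight t) / partfun S beta.
Proof. by rewrite /simdist /boltzmann -mulr_suml sum_decode_weight. Qed.

Lemma partfun_decomp :
  partfun S beta = sim_scale * partfun T beta + \sum_t bad_weight t.
Proof.
rewrite [LHS](partition_big (decode f) xpredT) //=.
by rewrite (eq_bigr _ (fun t _ => sum_decode_weight t)) big_split /= -mulr_sumr.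
Qed.

Lemma card_not_simulated_lt (t0 : config T) :
  (0 < sim_m f)%N -> (0 < sim_d f)%N ->
  (#|[set s | ~~ simulated s]| < ss_q S ^ #|ss_V S|)%N.
Proof.
have [_ [_ _ _ card_sim _]] := f_sim.
move=> m_gt0 d_gt0; have [s s_sim] : exists s, s \in simset (Ordinal m_gt0) t0.
  by apply/card_gt0P; rewrite card_sim ?ham_lt_Delta.
have card_config : #|config S| = (ss_q S ^ #|ss_V S|)%N by rewrite card_ffun card_ord.
rewrite -card_config -cardsT; apply: proper_card; rewrite properT; apply/eqP => all_out.
have : s \in [set s | ~~ simulated s] by rewrite all_out inE.
rewrite inE /simulated (decode_simset s_sim) => /negP; apply.
by apply/bigcupP; exists (Ordinal m_gt0).
Qed.

Lemma tvdist_simdist_le (t0 : config T) :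
  0 <= beta -> (0 < sim_m f)%N -> (0 < sim_d f)%N ->
  tvdist (simdist f beta) (boltzmann beta (S := T)) <=
    ((sim_m f)%:R * (sim_d f)%:R)^-1 * #|[set s | ~~ simulated s]|%:R
    * expR (- (beta * (sim_Delta f - ham_min T))).
Proof.
move=> beta_ge0 m_gt0 d_gt0.
have scale_gt0 : 0 < sim_scale by rewrite mulr_gt0 ?expR_gt0 // ltr0n muln_gt0 m_gt0.
have bad_ge0 t : 0 <= bad_weight t by apply: sumr_ge0 => s _; apply: expR_ge0.
have := tvdist_mix_le (p := simdist f beta) (q := boltzmann beta (S := T))
  scale_gt0 (fun t => expR_ge0 _) bad_ge0 (partfun_gt0 beta t0).
rewrite -/(partfun T beta) -partfun_decomp sum_bad_weight.
move=> /(_ simdist_decomp (fun t => erefl)) /le_trans; apply.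
have [tm ham_tm] := ham_min_attained t0.
have weight_tm_gt0 : 0 < weight beta tm := expR_gt0 _.
have partfun_ge : sim_scale * weight beta tm <= partfun S beta.
  rewrite partfun_decomp -[X in X <= _]addr0 lerD ?sumr_ge0 //.
  by rewrite ler_pM2l ?weight_le_partfun.
have bound_gt0 : 0 < sim_scale * weight beta tm by rewrite mulr_gt0.
have partfunS_gt0 := lt_le_trans bound_gt0 partfun_ge.
have inv_le : (partfun S beta)^-1 <= (sim_scale * weight beta tm)^-1.
  by rewrite lef_pV2 ?posrE.
apply: le_trans (ler_pM _ _ (bad_mass_le beta_ge0) inv_le) _.
- by apply: sumr_ge0 => s _; apply: expR_ge0.
- by rewrite invr_ge0 ltW.
have exp_split : expR (- (beta * (sim_Gamma f + sim_Delta f))) = expR (- (beta * sim_Gamma f))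
    * weight beta tm * expR (- (beta * (sim_Delta f - ham_min T))).
  by rewrite /weight ham_tm -!expRD; congr expR; ring.
rewrite exp_split /sim_scale natrM le_eqVlt; apply/orP; left; apply/eqP.
by field; rewrite !gt_eqF ?expR_gt0 ?ltr0n.
Qed.

End Bounds.

End Simulation.

Theorem mainTheorem14 (R : realType) (S T : spin_system R)
    (f : simulation S T) (beta : R) :
  is_spin_system S -> is_spin_system T ->
  0 < beta -> is_simulation f ->
  (0 < sim_m f)%N -> (0 < sim_d f)%N ->
  ham_max T < sim_Delta f ->
  tvdist (simdist f beta) (boltzmann beta (S := T)) <
    ((sim_m f)%:R * (sim_d f)%:R)^-1 * ((ss_q S)%:R ^+ #|ss_V S|)
    * expR (- (beta * (sim_Delta f - ham_min T))).
Proof.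
move=> [qS_ge2 _ _] [qT_ge2 _ _] beta_gt0 f_sim m_gt0 d_gt0 Delta_gt_max.
pose s0 : config S := [ffun=> Ordinal (ltnW qS_ge2)].
pose t0 : config T := [ffun=> Ordinal (ltnW qT_ge2)].
(* With V_T empty the sets sim_i(t) need not be disjoint, but C_T is then a
   single point. *)
have [v0 _|VT_empty] := pickP (@predT (ss_V T)).
  apply: le_lt_trans (tvdist_simdist_le f_sim v0 Delta_gt_max t0 (ltW beta_gt0) m_gt0 d_gt0) _.
  rewrite ltr_pM2r ?expR_gt0 // ltr_pM2l ?invr_gt0 ?mulr_gt0 ?ltr0n // -natrX ltr_nat.
  exact: card_not_simulated_lt.
rewrite tvdist_subsingleton; last first.
- by rewrite (sum_simdist f beta s0) (sum_boltzmann beta t0).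
- by move=> t t'; apply/ffunP => v; have := VT_empty v.
by rewrite !mulr_gt0 ?expR_gt0 ?invr_gt0 ?mulr_gt0 ?exprn_gt0 ?ltr0n ?m_gt0 ?d_gt0 ?(ltnW qS_ge2).
Qed.
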